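(* Let $\mathbb{X},\mathbb{Y}$ be Banach spaces, $\varphi:\mathbb{X}\to\mathbb{Y}$ a mapping and $\bar x\in\mathbb{X}$. Suppose that $\varphi$ is Fréchet differentiable at $\bar x$, with derivative $\nabla\varphi(\bar x)$, and that there exist $\kappa,r>0$ such that $$\mathbf{d}(\bar x,\varphi^{-1}(y))\le \kappa\,\|\varphi(\bar x)-y\|\quad\text{for all } y\in\mathbb{Y}\text{ with }\|y-\varphi(\bar x)\|<r.$$ Then $\nabla\varphi(\bar x)(\mathbb{X})$ is a closed linear subspace of $\mathbb{Y}$.
   Context: For a subset $D$ of a normed space, $\mathbf{d}(x,D):=\inf\{\|x-y\|:y\in D\}$ (with $\inf\emptyset=+\infty$), and $\varphi^{-1}(y):=\{x\in\mathbb{X}:\varphi(x)=y\}$. *)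

From HB Require Import structures.
From mathcomp Require Import all_boot all_order all_algebra.
From mathcomp Require Import all_classical all_reals all_analysis.
Set Implicit Arguments. Unset Strict Implicit. Unset Printing Implicit Defensive.
Import Order.TTheory GRing.Theory Num.Theory.
Import numFieldNormedType.Exports.
Local Open Scope classical_set_scope.
Local Open Scope ring_scope.

(* d(x, D) := inf { ||x - y|| : y in D }, valued in the extended reals,
   so that d(x, emptyset) = +oo. *)
Definition dist_set (R : realType) (X : normedModType R) (x : X) (D : set X)
  : \bar R := ereal_inf [set (`|x - y|)%:E | y in D].

From HB Require Import structures.
From mathcomp Require Import all_boot all_order all_algebra.
From mathcomp Require Import all_classical all_reals all_analysis.
From mathcomp Require Import lra.
Set Implicit Arguments. Unset Strict Implicit. Unset Printing Implicit Defensive.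
Import Order.TTheory GRing.Theory Num.Theory.
Import numFieldNormedType.Exports.
Local Open Scope classical_set_scope.
Local Open Scope ring_scope.

(* Metric regularity forces A := D phi(xbar) to be onto, which is more than
   closedness of its range.  Solving phi(x) = phi(xbar) + t v for small t and
   rescaling shows that every v is within |v|/2 of A u for some u with
   |u| <= 2 kappa |v|.  Iterating this on the residuals gives a series
   sum u_k, dominated by a geometric one, which converges in the Banach
   space X; continuity of A then yields A (sum u_k) = v. *)

Lemma differentiable_remainder_le (R : realType) (X Y : normedModType R)
    (f : X -> Y) (x : X) :
  differentiable f x -> forall e, 0 < e -> exists2 d, 0 < d &
  forall h, `|h| < d -> `|f (x + h) - f x - 'd f x h| <= e * `|h|.
Proof.
move=> df e e_gt0.
have := diff_locally df; set o := [o_ _ _ of _] => Edf.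
have /nbhs_norm0P [d d_gt0 o_small] := littleoP o e_gt0.
exists d => // h h_ltd.
have Edf_h := congr1 (fun g => g h) Edf; rewrite /= /shift /= in Edf_h.
rewrite (addrC x h) Edf_h.
have -> : f x + 'd f x h + o h - f x - 'd f x h = o h.
  by rewrite -addrA -opprD addrAC subrr add0r.
exact: o_small.
Qed.

Lemma dist_set_lt (R : realType) (X : normedModType R) (x : X) (D : set X)
    (e : R) :
  (dist_set x D < e%:E)%E -> exists2 y, D y & `|x - y| < e.
Proof. by move=> /ereal_inf_lt [_ [y Dy <-]]; rewrite lte_fin; exists y. Qed.

Section MetricRegularity.
Variables (R : realType) (X Y : normedModType R) (phi : X -> Y) (xbar : X).
Variables (kappa r : R).
Hypothesis kappa_gt0 : 0 < kappa.
Hypothesis regular : forall y : Y, `|y - phi xbar| < r ->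
  (dist_set xbar (phi @^-1` [set y]) <= (kappa * `|phi xbar - y|)%:E)%E.

(* The factor 2 turns the infimum into an attained strict bound. *)
Lemma regular_preimage_near (y : Y) :
  0 < `|y - phi xbar| < r ->
  exists2 x, phi x = y & `|x - xbar| < 2 * kappa * `|y - phi xbar|.
Proof.
move=> /andP[y_gt0 y_ltr].
have [|x phixy hx] := @dist_set_lt _ _ xbar (phi @^-1` [set y])
  (2 * kappa * `|y - phi xbar|).
  apply: le_lt_trans (regular y_ltr) _.
  by rewrite lte_fin (distrC (phi xbar)) -mulrA ltr_pMl ?mulr_gt0 // ltr1n.
by exists x; rewrite // distrC.
Qed.

Lemma regular_derivative_approx :
  0 < r -> differentiable phi xbar ->
  forall v, exists u, `|u| <= 2 * kappa * `|v| /\ `|v - 'd phi xbar u| <= `|v| / 2.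
Proof.
move=> r_gt0 dphi v.
have e_gt0 : 0 < (4 * kappa)^-1 by rewrite invr_gt0 mulr_gt0.
have [d d_gt0 Hd] := differentiable_remainder_le dphi e_gt0.
have [->|v_neq0] := eqVneq v 0.
  by exists 0; rewrite linear0 !normr0 subr0 normr0 mulr0 mul0r.
have v_gt0 : 0 < `|v| by rewrite normr_gt0.
pose t := Num.min (r / (2 * `|v|)) (d / (4 * kappa * `|v|)).
have t_gt0 : 0 < t by rewrite lt_min !divr_gt0 ?mulr_gt0.
have tv_ltr : t * `|v| < r.
  have : t <= r / (2 * `|v|) by rewrite ge_min lexx.
  rewrite ler_pdivlMr ?mulr_gt0 // => ?; nra.
have tv_ltd : 2 * kappa * (t * `|v|) < d.
  have : t <= d / (4 * kappa * `|v|) by rewrite ge_min lexx orbT.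
  rewrite ler_pdivlMr ?mulr_gt0 // => ?; nra.
have ytv : phi xbar + t *: v - phi xbar = t *: v by rewrite addrC addKr.
have ynorm : `|phi xbar + t *: v - phi xbar| = t * `|v|.
  by rewrite ytv normrZ gtr0_norm.
have [x phix hx] : exists2 x, phi x = phi xbar + t *: v &
    `|x - xbar| < 2 * kappa * (t * `|v|).
  by rewrite -ynorm; apply: regular_preimage_near; rewrite ynorm mulr_gt0.
pose h := x - xbar.
have remainder := Hd h (lt_trans hx tv_ltd).
rewrite /h [xbar + _]addrC subrK phix ytv -/h in remainder.
exists (t^-1 *: h); split.
  rewrite normrZ gtr0_norm ?invr_gt0 // mulrC ler_pdivrMr //; nra.
have -> : v - 'd phi xbar (t^-1 *: h) = t^-1 *: (t *: v - 'd phi xbar h).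
  by rewrite linearZ scalerBr scalerA mulVf ?gt_eqF // scale1r.
rewrite normrZ gtr0_norm ?invr_gt0 // mulrC ler_pdivrMr //.
apply: le_trans remainder _.
rewrite mulrC ler_pdivrMr ?mulr_gt0 //; nra.
Qed.

End MetricRegularity.

Section ApproximateSolutions.
Variables (R : realType) (X : completeNormedModType R) (Y : normedModType R).
Variables (A : {linear X -> Y}) (C : R) (g : Y -> X).
Hypothesis C_ge0 : 0 <= C.
Hypothesis g_norm : forall w, `|g w| <= C * `|w|.
Hypothesis g_residual : forall w, `|w - A (g w)| <= `|w| / 2.

Definition residual (v : Y) (n : nat) : Y := iter n (fun w => w - A (g w)) v.

Definition correction (v : Y) (n : nat) : X := g (residual v n).

Lemma residual_norm_le v n : `|residual v n| <= geometric `|v| 2^-1 n.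
Proof.
elim: n => [|n IH]; first by rewrite /= expr0 mulr1.
rewrite /residual iterS -/(residual v n) /=.
by apply: le_trans (g_residual _) _; rewrite exprSr mulrA ler_pM2r.
Qed.

Lemma residual_cvg0 v : residual v @ \oo --> 0.
Proof.
apply/cvgr0Pnorm_lt => e e_gt0.
have geo0 : geometric `|v| (2^-1 : R) @ \oo --> 0.
  by apply: cvg_geometric; rewrite ger0_norm // invf_lt1 // ltr1n.
near=> n; apply: le_lt_trans (residual_norm_le v n) _.
rewrite -[X in X < _]ger0_norm ?mulr_ge0 ?exprn_ge0 //.
by near: n; exact: cvgr0_norm_lt geo0 _ e_gt0.
Unshelve. all: by end_near. Qed.

Lemma correction_norm_le v k : `|correction v k| <= geometric (C * `|v|) 2^-1 k.
Proof.
rewrite /= -mulrA; apply: le_trans (g_norm _) _.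
exact/ler_wpM2l/residual_norm_le.
Qed.

Lemma A_series_correction v n : A (series (correction v) n) = v - residual v n.
Proof.
elim: n => [|n IH]; first by rewrite /series /= big_geq // linear0 subrr.
rewrite seriesSr linearD IH /residual iterS -/(residual v n) /correction.
by rewrite opprB addrA addrAC.
Qed.

Lemma cvg_series_correction v : cvgn (series (correction v)).
Proof.
apply: normed_cvg.
apply: (@series_le_cvg _ _ (geometric (C * `|v|) 2^-1)).
- by move=> n /=.
- by move=> n; apply: geometric_ge0; rewrite ?mulr_ge0.
- exact: correction_norm_le.
- by apply: is_cvg_geometric_series; rewrite ger0_norm // invf_lt1 // ltr1n.
Qed.

Lemma approx_solvable_surjective : continuous A -> forall v, exists s, A s = v.
Proof.
move=> A_cont v; exists (limn (series (correction v))).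
have to_limit : (A \o series (correction v)) @ \oo -->
    A (limn (series (correction v))).
  apply: continuous_cvg; first exact: A_cont.
  exact: cvg_series_correction.
have to_v : (A \o series (correction v)) @ \oo --> v.
  have -> : A \o series (correction v) = fun n => v - residual v n.
    by apply: funext => n /=; rewrite A_series_correction.
  by rewrite -[v in _ --> v]subr0; apply: cvgB; [exact: cvg_cst|exact: residual_cvg0].
exact: cvg_unique to_limit to_v.
Qed.

End ApproximateSolutions.

Theorem proposition3p1 (R : realType) (X Y : completeNormedModType R)
  (phi : X -> Y) (xbar : X) (kappa r : R) :
  differentiable phi xbar ->
  0 < kappa -> 0 < r ->
  (forall y : Y, `|y - phi xbar| < r ->
     (dist_set xbar (phi @^-1` [set y]) <= (kappa * `|phi xbar - y|)%:E)%E) ->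
  closed (range ('d phi xbar)).
Proof.
move=> dphi kappa_gt0 r_gt0 regular.
have [g g_spec] := boolp.choice
  (regular_derivative_approx kappa_gt0 regular r_gt0 dphi).
have onto := approx_solvable_surjective (C := 2 * kappa)
  (mulr_ge0 (ler0n _ 2) (ltW kappa_gt0))
  (fun w => (g_spec w).1) (fun w => (g_spec w).2) (diff_continuous dphi).
suff -> : range ('d phi xbar) = setT by exact: closedT.
by apply/seteqP; split => // w _; have [s <-] := onto w; exists s.
Qed.
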